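(* Let $m,n\ge 1$ and let $A\in\{0,1\}^{m\times n}$ have exactly three ones in each row. If $\operatorname{conv}(\mathrm{NPadj}(A))$ is not a line segment (equivalently, $\mathrm{NPadj}(A)$ has more than two points), then there is no finite simple graph $G$ with $\mathrm{NPadj}(A)\le_a \mathrm{Stable}(G)$. In other words, $\operatorname{conv}(\mathrm{NPadj}(A))$ is not affinely equivalent to any face of $\operatorname{conv}(\mathrm{Stable}(G))$, for any graph $G$.
   Context: Polytopes are identified with their vertex sets; every 0/1 set $X$ is the vertex set of $\operatorname{conv}(X)$. **Definition of $\mathrm{NPadj}(A)$.** Let $m,n\ge1$ and let $A\in\{0,1\}^{m\times n}$ have exactly three ones in each row. Index the coordinates of $\mathbb{R}^{3n+3}$ by $y_1,y_2,y_3$ and by $x_j,\bar x_j,x'_j$ for $j\in[n]=\{1,\dots,n\}$. Then $\mathrm{NPadj}(A)$ is the set of vectors in $\{0,1\}^{3n+3}$ satisfying: - $x_j+\bar x_j=1$ for all $j\in[n]$; - $y_1+y_2+x'_j+\bar x_j=2$ for all $j\in[n]$; - for each row of $A$, with ones in columns $i<j<k$, the equation $y_3+x_i+x'_j+x'_k=2$. **Graph polytope.** For a graph $G=(V,E)$, $\mathrm{Stable}(G)=\{x\in\{0,1\}^V : x_u+x_v\le 1 \text{ for every edge } \{u,v\}\in E\}$. **Affine reduction of polytopes.** For finite sets $P,Q$ of 0/1 vectors, $P\le_a Q$ means: there is an affine map $\alpha$ defined on $\operatorname{conv}(P)$, injective there, such that $\alpha(\operatorname{conv}(P))$ is a face (possibly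 improper) of $\operatorname{conv}(Q)$. *)

From HB Require Import structures.
From mathcomp Require Import all_boot all_order all_algebra.
Set Implicit Arguments. Unset Strict Implicit. Unset Printing Implicit Defensive.
Import Order.TTheory GRing.Theory Num.Theory.

Local Open Scope ring_scope.

Definition conv (R : realFieldType) (T : finType) (X : {set {ffun T -> bool}})
  (v : T -> R) : Prop :=
  exists lam : {ffun T -> bool} -> R,
    (forall p, 0 <= lam p) /\ (forall p, p \notin X -> lam p = 0) /\
    \sum_p lam p = 1 /\
    (forall t, v t = \sum_p lam p * (p t)%:R).

Definition affmap (R : realFieldType) (S T : finType) (M : S -> T -> R)
  (b : T -> R) (x : S -> R) : T -> R :=
  fun t => b t + \sum_s M s t * x s.

Definition is_face (R : realFieldType) (T : finType) (Q : {set {ffun T -> bool}})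
  (F : (T -> R) -> Prop) : Prop :=
  exists (c : T -> R) (delta : R),
    (forall y, conv Q y -> \sum_t c t * y t <= delta) /\
    (forall y, F y <-> (conv Q y /\ \sum_t c t * y t = delta)).

(* P <=_a Q : an affine map, injective on conv(P), mapping conv(P) onto a face
   of conv(Q). *)
Definition aff_red (R : realFieldType) (S T : finType)
  (P : {set {ffun S -> bool}}) (Q : {set {ffun T -> bool}}) : Prop :=
  exists (M : S -> T -> R) (b : T -> R),
    (forall x x', conv P x -> conv P x' ->
        affmap M b x =1 affmap M b x' -> x =1 x') /\
    is_face Q (fun y => exists x, conv P x /\ y =1 affmap M b x).

(* Coordinates of R^{3n+3}: y_1,y_2,y_3, x_j, xbar_j, x'_j (j : 'I_n, 0-based). *)
Definition NPcoord (n : nat) : finType := ('I_3 + ('I_n + ('I_n + 'I_n)))%type.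
Definition cy (n k : nat) : NPcoord n := inl (inord k).   (* k = 0,1,2 : y_1,y_2,y_3 *)
Definition cx (n : nat) (j : 'I_n) : NPcoord n := inr (inl j).
Definition cxb (n : nat) (j : 'I_n) : NPcoord n := inr (inr (inl j)).
Definition cxp (n : nat) (j : 'I_n) : NPcoord n := inr (inr (inr j)).

Definition NPadj (m n : nat) (A : 'M[bool]_(m, n)) : {set {ffun NPcoord n -> bool}} :=
  [set x : {ffun NPcoord n -> bool} |
    [forall j : 'I_n, (x (cx j) : nat) + x (cxb j) == 1]%N &&
    [forall j : 'I_n, (x (cy n 0) : nat) + x (cy n 1) + x (cxp j) + x (cxb j) == 2]%N &&
    [forall r : 'I_m, forall i : 'I_n, forall j : 'I_n, forall k : 'I_n,
       [&& (i < j)%N, (j < k)%N, A r i, A r j & A r k] ==>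
       ((x (cy n 2) : nat) + x (cx i) + x (cxp j) + x (cxp k) == 2)%N]].

Definition Stable (V : finType) (e : rel V) : {set {ffun V -> bool}} :=
  [set x : {ffun V -> bool} | [forall u, forall v, e u v ==> ((x u : nat) + x v <= 1)%N]].

From HB Require Import structures.
From mathcomp Require Import all_boot all_order all_algebra.
From mathcomp Require Import zify lra.
Import Order.TTheory GRing.Theory Num.Theory.
Set Implicit Arguments. Unset Strict Implicit. Unset Printing Implicit Defensive.

(* An affine injection of conv(P) onto a face F of a stable set polytope maps
   the vertices of P bijectively onto the stable sets lying in F.  NPadj A is
   closed under complementation p |-> 1 - p, and p + (1 - p) is constant, so
   the images u, u' of complementary vertices always add up to the same vector
   a + b.  For 0/1 vectors this forces u' = u (+) a (+) b and
   a && b <= u <= a || b; conversely every stable u with these properties and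
   u (+) a (+) b stable lies on F.  This vertex set is closed under
   u |-> u (+) v (+) w, so as soon as it has three elements x, y, z the flips by
   x (+) y and x (+) z generate a free action of the Klein four-group on it, and
   its size is divisible by 4.  On NPadj A, however, complementation and the
   swap of y_1, y_2 act freely except on the two swap-fixed points (y = 0 and
   its complement), so #|NPadj A| = 2 mod 4. *)

Local Open Scope ring_scope.

Definition vec01 (R : realFieldType) (T : finType) (p : {ffun T -> bool}) : T -> R :=
  fun t => (p t)%:R.

Section ConvexHull.
Variable R : realFieldType.
Local Notation vec := (@vec01 R _).

Lemma vec01_inj (T : finType) (p p' : {ffun T -> bool}) : vec p =1 vec p' -> p = p'.
Proof.
move=> E; apply/ffunP => t; move: (E t); rewrite /vec01 => /eqP; rewrite eqr_nat.
by case: (p t); case: (p' t).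
Qed.

Lemma conv_vec01 (T : finType) (X : {set {ffun T -> bool}}) p :
  p \in X -> conv X (vec p).
Proof.
move=> pX; exists (fun q => (q == p)%:R); split; [|split; [|split]].
- by move=> q; rewrite ler0n.
- by move=> q; apply: contraNeq; rewrite pnatr_eq0 eqb0 negbK => /eqP->.
- by rewrite (bigD1 p) //= eqxx big1 ?addr0 // => q /negbTE ->.
- move=> t; rewrite (bigD1 p) //= eqxx mul1r big1 ?addr0 // => q /negbTE ->.
  by rewrite mul0r.
Qed.

Lemma conv_convex_comb (T I : finType) (X : {set {ffun T -> bool}})
    (g : I -> {ffun T -> bool}) (lam : I -> R) :
  (forall i, g i \in X) -> (forall i, 0 <= lam i) -> \sum_i lam i = 1 ->
  conv X (fun t => \sum_i lam i * (g i t)%:R).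
Proof.
move=> gX lam_ge0 lam1.
have pick_gi i F : \sum_p F p * (g i == p)%:R = F (g i) :> R.
  rewrite (bigD1 (g i)) //= eqxx mulr1 big1 ?addr0 // => q.
  by rewrite eq_sym => /negbTE ->; rewrite mulr0.
exists (fun p => \sum_i lam i * (g i == p)%:R); split; [|split; [|split]].
- by move=> p; apply: sumr_ge0 => i _; rewrite mulr_ge0 ?ler0n.
- move=> p pX; apply: big1 => i _; case: eqP => [E|]; last by rewrite mulr0.
  by rewrite -E gX in pX.
- rewrite exchange_big -[RHS]lam1; apply: eq_bigr => i _.
  exact: pick_gi i (fun _ => lam i).
- move=> t; under [RHS]eq_bigr do rewrite mulr_suml.
  rewrite [RHS]exchange_big /=; apply: eq_bigr => i _.
  by rewrite -(pick_gi i (fun p => lam i * (p t)%:R)); apply: eq_bigr => p _; rewrite mulrAC.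
Qed.

Lemma conv_midpoint (T : finType) (X : {set {ffun T -> bool}}) (u v : T -> R) :
  conv X u -> conv X v -> conv X (fun t => (u t + v t) / 2).
Proof.
move=> [lu [lu0 [luX [lu1 luE]]]] [lv [lv0 [lvX [lv1 lvE]]]].
exists (fun p => (lu p + lv p) / 2); split; [|split; [|split]].
- by move=> p; rewrite mulr_ge0 ?addr_ge0 ?invr_ge0 ?ler0n.
- by move=> p pX; rewrite luX // lvX // addr0 mul0r.
- by rewrite -mulr_suml big_split /= lu1 lv1 divff // (_ : 1 + 1 = 2%:R) // pnatr_eq0.
- move=> t; rewrite luE lvE -big_split /= mulr_suml; apply: eq_bigr => p _.
  by rewrite [RHS]mulrAC !mulrDl.
Qed.

Lemma conv_ge0_le1 (T : finType) (X : {set {ffun T -> bool}}) (v : T -> R) t :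
  conv X v -> 0 <= v t <= 1.
Proof.
move=> [lam [lam_ge0 [_ [lam1 ->]]]]; apply/andP; split.
  by apply: sumr_ge0 => p _; rewrite mulr_ge0 ?ler0n.
rewrite -[X in _ <= X]lam1; apply: ler_sum => p _.
by case: (p t); rewrite ?mulr1 ?mulr0.
Qed.

Lemma exists_weight_gt0 (I : finType) (lam : I -> R) :
  (forall i, 0 <= lam i) -> \sum_i lam i = 1 -> exists i, 0 < lam i.
Proof.
move=> lam_ge0 lam1; have : \sum_i lam i != 0 by rewrite lam1 oner_neq0.
by rewrite psumr_neq0 // => /hasP[i _ /= lam_gt0]; exists i.
Qed.

Lemma extreme_vec01 (T I : finType) (lam : I -> R) (x : I -> T -> R)
    (p : {ffun T -> bool}) :
  (forall i, 0 <= lam i) -> \sum_i lam i = 1 ->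
  (forall i t, lam i != 0 -> 0 <= x i t <= 1) ->
  vec p =1 (fun t => \sum_i lam i * x i t) ->
  forall i, 0 < lam i -> x i =1 vec p.
Proof.
move=> lam_ge0 lam1 x01 pE i lam_gt0 t.
have lam_neq0 : lam i != 0 by rewrite gt_eqF.
have sum0 (y : I -> R) : (forall j, lam j != 0 -> 0 <= y j) ->
    \sum_j lam j * y j = 0 -> y i = 0.
  move=> y_ge0 y0; have nn j : true -> 0 <= lam j * y j.
    by have [->|/y_ge0] := eqVneq (lam j) 0; rewrite ?mul0r // => /(mulr_ge0 (lam_ge0 j)).
  by have /eqP := psumr_eq0P nn y0 (i:=i) isT; rewrite mulf_eq0 (negbTE lam_neq0) => /eqP.
move: (pE t); rewrite /vec01; case: (p t) => Et.
- apply/eqP; rewrite eq_sym -subr_eq0; apply/eqP; apply: sum0 (fun j => 1 - x j t) _ _.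
    by move=> j /(x01 j t) /andP[_]; rewrite subr_ge0.
  under eq_bigr do rewrite mulrBr mulr1.
  by rewrite sumrB lam1 -Et subrr.
- apply: sum0 (fun j => x j t) _ _ => [j /(x01 j t) /andP[] //|].
  by rewrite -Et.
Qed.

Section AffineMap.
Variables (S T : finType) (M : S -> T -> R) (b : T -> R).
Local Notation phi := (affmap M b).

Lemma affmap_convex_comb (I : finType) (lam : I -> R) (x : I -> S -> R) :
  \sum_i lam i = 1 ->
  phi (fun s => \sum_i lam i * x i s) =1 (fun t => \sum_i lam i * phi (x i) t).
Proof.
move=> lam1 t; rewrite /affmap.
under [RHS]eq_bigr do rewrite mulrDr.
rewrite big_split /= -mulr_suml lam1 mul1r; congr (_ + _).
under eq_bigr do rewrite mulr_sumr.
rewrite exchange_big /=; apply: eq_bigr => s _.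
by rewrite mulr_sumr; apply: eq_bigr => i _; rewrite mulrCA.
Qed.

Lemma affmap_sum2 (u v u' v' : S -> R) :
  (forall s, u s + v s = u' s + v' s) ->
  forall t, phi u t + phi v t = phi u' t + phi v' t.
Proof.
move=> E t; rewrite /affmap addrACA [RHS]addrACA -!big_split /=; congr (_ + _).
by apply: eq_bigr => s _; rewrite -!mulrDr E.
Qed.

Lemma eq_affmap (u v : S -> R) : u =1 v -> phi u =1 phi v.
Proof. by move=> E t; rewrite /affmap; under eq_bigr do rewrite E. Qed.

End AffineMap.
End ConvexHull.

Section Face.
Variables (R : realFieldType) (S T : finType).
Variables (P : {set {ffun S -> bool}}) (Q : {set {ffun T -> bool}}).
Variables (M : S -> T -> R) (b : T -> R) (c : T -> R) (delta : R).
Local Notation phi := (affmap M b).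
Local Notation vec := (@vec01 R _).

Hypothesis phi_inj : forall x x', conv P x -> conv P x' -> phi x =1 phi x' -> x =1 x'.
Hypothesis face_valid : forall y, conv Q y -> \sum_t c t * y t <= delta.
Hypothesis faceE : forall y, (exists x, conv P x /\ y =1 phi x) <->
  (conv Q y /\ \sum_t c t * y t = delta).

Lemma face_image x : conv P x -> conv Q (phi x) /\ \sum_t c t * phi x t = delta.
Proof. by move=> Px; apply/faceE; exists x. Qed.

Lemma face_of_midpoint (y1 y2 z : T -> R) : conv Q y1 -> conv Q y2 ->
  (forall t, y1 t + y2 t = z t + z t) -> \sum_t c t * z t = delta ->
  \sum_t c t * y1 t = delta.
Proof.
move=> Qy1 Qy2 yE zE.
have : \sum_t c t * y1 t + \sum_t c t * y2 t = delta + delta.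
  by rewrite -big_split -zE -big_split /=; apply: eq_bigr => t _; rewrite -!mulrDr yE.
by have := face_valid Qy1; have := face_valid Qy2; lra.
Qed.

(* The slacks [delta - c.q] of the vertices q are nonnegative and their
   lam-average vanishes. *)
Lemma face_support_vertex (lam : {ffun T -> bool} -> R) q :
  (forall p, 0 <= lam p) -> (forall p, p \notin Q -> lam p = 0) ->
  \sum_p lam p = 1 ->
  \sum_t c t * (\sum_p lam p * (p t)%:R) = delta ->
  0 < lam q -> \sum_t c t * vec q t = delta.
Proof.
move=> lam_ge0 lamQ lam1 lamE lam_gt0.
have slack0 : \sum_p lam p * (delta - \sum_t c t * vec p t) = 0.
  under eq_bigr do rewrite mulrBr.
  rewrite sumrB -mulr_suml lam1 mul1r -{1}lamE; apply/eqP; rewrite subr_eq0; apply/eqP.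
  under eq_bigr do rewrite mulr_sumr.
  rewrite exchange_big /=; apply: eq_bigr => p _; rewrite mulr_sumr.
  by apply: eq_bigr => t _; rewrite /vec01 mulrCA.
have slack_ge0 p : true -> 0 <= lam p * (delta - \sum_t c t * vec p t).
  move=> _; case: (boolP (p \in Q)) => pQ; last by rewrite lamQ // mul0r.
  by rewrite mulr_ge0 // subr_ge0; apply/face_valid/conv_vec01.
have /eqP := psumr_eq0P slack_ge0 slack0 (i := q) isT.
by rewrite mulf_eq0 (negbTE (lt0r_neq0 lam_gt0)) subr_eq0 => /eqP.
Qed.

Lemma face_vertex_preimage q : q \in Q -> \sum_t c t * vec q t = delta ->
  exists2 p, p \in P & vec q =1 phi (vec p).
Proof.
move=> qQ qE.
have [x [[mu [mu_ge0 [muP [mu1 muE]]]] qx]] : exists x, conv P x /\ vec q =1 phi x.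
  by apply/faceE; split => //; apply: conv_vec01.
have qmu : vec q =1 (fun t => \sum_p mu p * phi (vec p) t).
  by move=> t; rewrite -affmap_convex_comb // qx; apply: eq_affmap.
have [p mu_gt0] := exists_weight_gt0 mu_ge0 mu1.
have inP p' : mu p' != 0 -> p' \in P by apply: contraNT => /muP ->.
exists p; first by apply/inP/lt0r_neq0.
move=> t; apply/esym/(extreme_vec01 mu_ge0 mu1 _ qmu mu_gt0) => p' t' /inP p'P.
by have [/conv_ge0_le1 ->] := face_image (conv_vec01 R p'P).
Qed.

(* phi p is a convex combination of vertices on the face, each the image of a
   vertex of P; injectivity pulls this back to a combination equal to the
   extreme point p. *)
Lemma vertex_image p : p \in P -> exists2 q, q \in Q & vec q =1 phi (vec p).
Proof.
move=> pP.
have [[lam [lam_ge0 [lamQ [lam1 lamE]]]] phipE] := face_image (conv_vec01 R pP).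
have lamE' : \sum_t c t * (\sum_q lam q * (q t)%:R) = delta.
  by rewrite -phipE; apply: eq_bigr => t _; rewrite lamE.
have inQ q : 0 < lam q -> q \in Q.
  by move=> lam_gt0; apply: contraTT lam_gt0 => /lamQ ->; rewrite ltxx.
have [pre preE] : exists pre : {ffun T -> bool} -> {ffun S -> bool},
    forall q, pre q \in P /\ (0 < lam q -> vec q =1 phi (vec (pre q))).
  apply: (@fin_all_exists _ _
    (fun q p' => p' \in P /\ (0 < lam q -> vec q =1 phi (vec p')))) => q.
  case: (boolP (0 < lam q)) => [lam_gt0|]; last by exists p.
  have [p' p'P p'E] := face_vertex_preimage (inQ q lam_gt0)
    (face_support_vertex lam_ge0 lamQ lam1 lamE' lam_gt0).
  by exists p'.
have pre_in q : pre q \in P by case: (preE q).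
have phipE' : phi (vec p) =1 phi (fun s => \sum_q lam q * (pre q s)%:R).
  move=> t; rewrite affmap_convex_comb // lamE; apply: eq_bigr => q _.
  have [->|lam_neq0] := eqVneq (lam q) 0; first by rewrite !mul0r.
  have lam_gt0 : 0 < lam q by rewrite lt0r lam_neq0 lam_ge0.
  by have [_ <-] := preE q.
have preP := phi_inj (conv_vec01 R pP) (conv_convex_comb pre_in lam_ge0 lam1) phipE'.
have [q lam_gt0] := exists_weight_gt0 lam_ge0 lam1.
exists q; first exact: inQ.
move=> t; rewrite (proj2 (preE q) lam_gt0); apply: eq_affmap => s.
apply: (extreme_vec01 (x := fun q => vec (pre q))) => // q' t' _.
by rewrite /vec01; case: (pre q' t'); rewrite ?ler01 ?lexx.
Qed.

Lemma exists_vertex_map : exists h : {ffun S -> bool} -> {ffun T -> bool},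
  forall p, p \in P -> h p \in Q /\ vec (h p) =1 phi (vec p).
Proof.
apply: (@fin_all_exists _ _
  (fun p q => p \in P -> q \in Q /\ vec q =1 phi (vec p))) => p.
case: (boolP (p \in P)) => [/vertex_image[q qQ qE]|_]; first by exists q.
by exists [ffun=> false].
Qed.

Variable h : {ffun S -> bool} -> {ffun T -> bool}.
Hypothesis vmap_in : forall p, p \in P -> h p \in Q.
Hypothesis vec_vmap : forall p, p \in P -> vec (h p) =1 phi (vec p).

Lemma vmap_inj : {in P &, injective h}.
Proof.
move=> p p' pP p'P hE; apply/(vec01_inj (R := R))/phi_inj; try exact: conv_vec01.
by move=> t; rewrite -vec_vmap // hE vec_vmap.
Qed.

Lemma vmap_onto q : q \in Q -> \sum_t c t * vec q t = delta -> q \in h @: P.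
Proof.
move=> qQ /(face_vertex_preimage qQ) [p pP qE]; apply/imsetP; exists p => //.
by apply: (vec01_inj (R := R)) => t; rewrite qE vec_vmap.
Qed.

End Face.

Local Close Scope ring_scope.

Section Flip.
Variable V : finType.
Implicit Types a b u : {ffun V -> bool}.

Definition complv u : {ffun V -> bool} := [ffun t => ~~ u t].
Definition flip a b u : {ffun V -> bool} := [ffun t => u t (+) a t (+) b t].

Lemma complvK : involutive complv.
Proof. by move=> u; apply/ffunP => t; rewrite !ffunE negbK. Qed.

Lemma flipK a b : involutive (flip a b).
Proof.
by move=> u; apply/ffunP => t; rewrite !ffunE; case: (u t); case: (a t); case: (b t).
Qed.

Lemma flipC a b a' b' u : flip a b (flip a' b' u) = flip a' b' (flip a b u).
Proof.
apply/ffunP => t; rewrite !ffunE.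
by case: (u t); case: (a t); case: (b t); case: (a' t); case: (b' t).
Qed.

Lemma flip_flip a b b' u : flip a b' (flip a b u) = flip b b' u.
Proof.
by apply/ffunP => t; rewrite !ffunE; case: (u t); case: (a t); case: (b t); case: (b' t).
Qed.

Lemma flip_id a b u : flip a b u = u -> a = b.
Proof.
move=> /ffunP E; apply/ffunP => t; move: (E t); rewrite ffunE.
by case: (u t); case: (a t); case: (b t).
Qed.

End Flip.

Definition between (a b u : bool) := (a && b ==> u) && (u ==> a || b).

Lemma bits_sumE (R : realFieldType) (u w a b : bool) :
  (u%:R + w%:R = a%:R + b%:R :> R)%R <-> w = u (+) a (+) b /\ between a b u.
Proof.
split; first by move/eqP; rewrite -!natrD eqr_nat; case: u; case: w; case: a; case: b.
by case=> -> Bu; apply/eqP; rewrite -!natrD eqr_nat; move: Bu; case: u; case: a; case: b.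
Qed.

Lemma between_xor3 (a b u v w : bool) :
  between a b u -> between a b v -> between a b w -> between a b (u (+) v (+) w).
Proof. by case: a; case: b; case: u; case: v; case: w. Qed.

Definition edge_split (ap aq bp bq up uq : bool) :=
  [&& up + uq <= 1, (up (+) ap (+) bp) + (uq (+) aq (+) bq) <= 1,
      between ap bp up & between aq bq uq].

Lemma edge_split_xor3 (ap aq bp bq up uq vp vq wp wq : bool) :
  ap + aq <= 1 -> bp + bq <= 1 ->
  edge_split ap aq bp bq up uq -> edge_split ap aq bp bq vp vq ->
  edge_split ap aq bp bq wp wq ->
  edge_split ap aq bp bq (up (+) vp (+) wp) (uq (+) vq (+) wq).
Proof.
by case: ap; case: aq; case: bp; case: bq; case: up; case: uq; case: vp; case: vq;
  case: wp; case: wq.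
Qed.

Section SplitStable.
Variables (V : finType) (e : rel V) (a b : {ffun V -> bool}).

Lemma StableP (x : {ffun V -> bool}) : reflect (forall p q, e p q -> x p + x q <= 1) (x \in Stable e).
Proof.
rewrite inE; apply: (iffP forallP) => [S p q epq|S p].
  by have /forallP/(_ q)/implyP := S p; apply.
by apply/forallP => q; apply/implyP; apply: S.
Qed.

Definition splits_stable u :=
  [&& u \in Stable e, flip a b u \in Stable e & [forall t, between (a t) (b t) (u t)]].

Lemma splits_stable_flip u v w : a \in Stable e -> b \in Stable e ->
  splits_stable u -> splits_stable v -> splits_stable w -> splits_stable (flip v w u).
Proof.
move=> /StableP Sa /StableP Sb.
have edgeP z : splits_stable z -> forall p q, e p q ->
    edge_split (a p) (a q) (b p) (b q) (z p) (z q).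
  case/and3P => /StableP Sz /StableP Sz' /forallP Bz p q epq.
  by rewrite /edge_split Sz // !Bz !andbT; have := Sz' p q epq; rewrite !ffunE.
move=> Hu Hv Hw; have edge_uvw p q (epq : e p q) := edge_split_xor3 (Sa p q epq)
  (Sb p q epq) (edgeP _ Hu p q epq) (edgeP _ Hv p q epq) (edgeP _ Hw p q epq).
apply/and3P; split.
- by apply/StableP => p q /edge_uvw /and4P[]; rewrite !ffunE.
- by apply/StableP => p q /edge_uvw /and4P[]; rewrite !ffunE.
- apply/forallP => t; rewrite ffunE.
  have between_t z : splits_stable z -> between (a t) (b t) (z t).
    by case/and3P => _ _ /forallP.
  exact: between_xor3 (between_t _ Hu) (between_t _ Hv) (between_t _ Hw).
Qed.

End SplitStable.

Section KleinFour.
Variables (T : finType) (f g : T -> T).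
Hypotheses (fK : involutive f) (gK : involutive g) (fgC : forall x, f (g x) = g (f x)).

Definition orbit4 x := x |: (f x |: (g x |: [set f (g x)])).

Lemma mem_orbit4_f x y : (f y \in orbit4 x) = (y \in orbit4 x).
Proof.
rewrite !inE !(can2_eq fK fK) !fK.
by case: (y == x); case: (y == f x); case: (y == g x); case: (y == f (g x)).
Qed.

Lemma mem_orbit4_g x y : (g y \in orbit4 x) = (y \in orbit4 x).
Proof.
rewrite !inE !(can2_eq gK gK) -!fgC !gK.
by case: (y == x); case: (y == f x); case: (y == g x); case: (y == f (g x)).
Qed.

Lemma card_orbit4 x : f x != x -> g x != x -> f (g x) != x -> #|orbit4 x| = 4.
Proof.
move=> fx gx fgx.
have fxgx : f x != g x by rewrite (can2_eq fK fK) eq_sym.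
have fxfgx : f x != f (g x) by rewrite (can_eq fK) eq_sym.
have gxfgx : g x != f (g x) by rewrite fgC (can_eq gK) eq_sym.
rewrite /orbit4 !cardsU1 cards1 !inE !(eq_sym x) (negbTE fx) (negbTE gx) (negbTE fgx).
by rewrite (negbTE fxgx) (negbTE fxfgx) gxfgx.
Qed.

Lemma dvd4_card_free_klein (W : {set T}) :
  (forall x, x \in W -> f x \in W) -> (forall x, x \in W -> g x \in W) ->
  (forall x, x \in W -> [&& f x != x, g x != x & f (g x) != x]) -> 4 %| #|W|.
Proof.
have [k] := ubnP #|W|; elim: k W => // k IH W Wk Wf Wg Wfree.
have [->|[x xW]] := set_0Vmem W; first by rewrite cards0.
have /and3P[fx gx fgx] := Wfree x xW.
have OW : orbit4 x \subset W.
  by apply/subsetP => y; rewrite !inE => /or4P[] /eqP->; rewrite ?Wf ?Wg ?xW.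
have cardW : #|W| = #|W :\: orbit4 x| + 4.
  by rewrite cardsD (setIidPr OW) card_orbit4 // subnK // -(card_orbit4 fx gx fgx) subset_leq_card.
rewrite cardW dvdn_addl //; apply: IH.
- by move: Wk; rewrite cardW; lia.
- by move=> y; rewrite !in_setD mem_orbit4_f => /andP[-> /Wf].
- by move=> y; rewrite !in_setD mem_orbit4_g => /andP[-> /Wg].
- by move=> y /setDP[/Wfree].
Qed.

End KleinFour.

Section StableFace.
Variables (R : realFieldType) (S V : finType) (e : rel V) (P : {set {ffun S -> bool}}).
Variables (M : S -> V -> R) (b : V -> R) (c : V -> R) (delta : R).
Local Notation phi := (affmap M b).
Local Notation vec := (@vec01 R _).

Hypothesis phi_inj : forall x x', conv P x -> conv P x' -> phi x =1 phi x' -> x =1 x'.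
Hypothesis face_valid : forall y, conv (Stable e) y -> (\sum_t c t * y t <= delta)%R.
Hypothesis faceE : forall y, (exists x, conv P x /\ y =1 phi x) <->
  (conv (Stable e) y /\ \sum_t c t * y t = delta)%R.
Hypothesis complP : forall p, p \in P -> complv p \in P.

Variable h : {ffun S -> bool} -> {ffun V -> bool}.
Hypothesis vmap_in : forall p, p \in P -> h p \in Stable e.
Hypothesis vec_vmap : forall p, p \in P -> vec (h p) =1 phi (vec p).

Variables (p0 : {ffun S -> bool}) (p0P : p0 \in P).
Let u0 := h p0.
Let u1 := h (complv p0).

Lemma vec_vmap_compl p : p \in P ->
  forall t, (vec (h p) t + vec (h (complv p)) t = vec u0 t + vec u1 t)%R.
Proof.
move=> pP t; rewrite !vec_vmap ?complP //; apply: affmap_sum2 => s.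
by rewrite /vec01 !ffunE; case: (p s); case: (p0 s); rewrite /= ?addr0 ?add0r.
Qed.

Lemma vmap_image_splits : h @: P = [set u | splits_stable e u0 u1 u].
Proof.
apply/setP => u; rewrite inE; apply/idP/idP.
- case/imsetP => p pP ->.
  have sumE t := proj1 (bits_sumE _ _ _ _ _) (vec_vmap_compl pP t).
  have flipE : flip u0 u1 (h p) = h (complv p).
    by apply/ffunP => t; rewrite ffunE; case: (sumE t).
  rewrite /splits_stable flipE !vmap_in ?complP //.
  by apply/forallP => t; case: (sumE t).
- case/and3P => uS fuS /forallP Bu; apply: (vmap_onto faceE vec_vmap uS).
  have [_ midE] := face_image faceE
    (conv_midpoint (conv_vec01 R p0P) (conv_vec01 R (complP p0P))).
  apply: (face_of_midpoint face_valid (conv_vec01 R uS) (conv_vec01 R fuS) _ midE) => t.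
  rewrite (proj2 (bits_sumE _ _ _ _ _) (conj (ffunE _ t) (Bu t))).
  rewrite -!/(vec01 R _ t) !vec_vmap ?complP //.
  by apply: affmap_sum2 => s; rewrite -splitr.
Qed.

Lemma dvd4_card_complv_face : (2 < #|P|)%N -> (4 %| #|P|)%N.
Proof.
rewrite -(card_in_imset (vmap_inj phi_inj vec_vmap)) vmap_image_splits.
set W := [set u | _].
have flipW u v w : u \in W -> v \in W -> w \in W -> flip v w u \in W.
  by rewrite !inE; apply: splits_stable_flip; apply: vmap_in; rewrite ?complP.
case/card_gt2P => [x [y [z [[xW yW zW] [xy yz zx]]]]].
apply: (dvd4_card_free_klein (flipK x y) (flipK x z) (flipC x y x z)).
- by move=> u uW; apply: flipW.
- by move=> u uW; apply: flipW.
- move=> u _; rewrite flip_flip.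
  apply/and3P; split; apply/eqP => /flip_id xyz.
  + by rewrite xyz eqxx in xy.
  + by rewrite xyz eqxx in zx.
  + by rewrite xyz eqxx in yz.
Qed.

End StableFace.

Lemma dvd4_card_aff_red_Stable (R : realFieldType) (S V : finType)
    (P : {set {ffun S -> bool}}) (e : rel V) :
  (forall p, p \in P -> complv p \in P) -> (2 < #|P|)%N ->
  aff_red R P (Stable e) -> (4 %| #|P|)%N.
Proof.
move=> complP P_gt2 [M [b [phi_inj [c [delta [face_valid faceE]]]]]].
have [h hP] := exists_vertex_map phi_inj face_valid faceE.
have [p0 p0P] : exists p0, p0 \in P by apply/card_gt0P; rewrite (leq_trans _ P_gt2).
have h_in p : p \in P -> h p \in Stable e by case/hP.
have vec_h p : p \in P -> vec01 R (h p) =1 affmap M b (vec01 R p) by case/hP.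
by have := dvd4_card_complv_face phi_inj face_valid faceE complP h_in vec_h p0P P_gt2.
Qed.

Section NPadj.
Variables (m n : nat) (A : 'M[bool]_(m, n)).
Local Notation X := {ffun NPcoord n -> bool}.

Lemma NPadjP (x : X) :
  reflect [/\ forall j, x (cx j) + x (cxb j) = 1,
              forall j, x (cy n 0) + x (cy n 1) + x (cxp j) + x (cxb j) = 2 &
              forall (r : 'I_m) (i j k : 'I_n), i < j -> j < k -> A r i -> A r j -> A r k ->
                x (cy n 2) + x (cx i) + x (cxp j) + x (cxp k) = 2]
          (x \in NPadj A).
Proof.
rewrite inE; apply: (iffP idP).
  case/andP => [/andP[/forallP x_cx /forallP x_cy] /forallP x_row]; split.
  - by move=> j; apply/eqP; apply: x_cx.
  - by move=> j; apply/eqP; apply: x_cy.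
  - move=> r i j k ij jk Ai Aj Ak; apply/eqP.
    by have := forallP (forallP (forallP (x_row r) i) j) k; rewrite ij jk Ai Aj Ak.
case=> x_cx x_cy x_row; apply/andP; split; [apply/andP; split|].
- by apply/forallP => j; rewrite x_cx.
- by apply/forallP => j; rewrite x_cy.
- apply/forallP => r; apply/forallP => i; apply/forallP => j; apply/forallP => k.
  by apply/implyP => /and5P[ij jk Ai Aj Ak]; rewrite (x_row r i j k).
Qed.

Lemma eq_cy k l : k < 3 -> l < 3 -> (cy n k == cy n l) = (k == l).
Proof.
move=> k3 l3; apply/eqP/eqP => [[/(congr1 val)]|->] //=.
by rewrite !inordK.
Qed.

Definition swap12 (x : X) : X := [ffun t =>
  if t == cy n 0 then x (cy n 1) else if t == cy n 1 then x (cy n 0) else x t].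

(* y = 0, x = 0, xbar = x' = 1 *)
Definition np0 : X := [ffun t => if t is inr (inr _) then true else false].

Lemma swap12K : involutive swap12.
Proof.
move=> x; apply/ffunP => t; rewrite !ffunE eqxx eq_cy // eqxx.
by case: eqP => [->|_] //; case: eqP => [->|].
Qed.

Lemma swap12_complv x : complv (swap12 x) = swap12 (complv x).
Proof. by apply/ffunP => t; rewrite !ffunE; case: eqP => _ //; case: eqP. Qed.

Lemma complv_NPadj x : x \in NPadj A -> complv x \in NPadj A.
Proof.
case/NPadjP => x_cx x_cy x_row; apply/NPadjP; split => [j|j|r i j k ij jk Ai Aj Ak].
- by rewrite !ffunE; move: (x_cx j); case: (x _); case: (x _).
- by rewrite !ffunE; move: (x_cy j); case: (x _); case: (x _); case: (x _); case: (x _).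
- rewrite !ffunE; move: (x_row r i j k ij jk Ai Aj Ak).
  by case: (x _); case: (x _); case: (x _); case: (x _).
Qed.

Lemma swap12_NPadj x : x \in NPadj A -> swap12 x \in NPadj A.
Proof.
case/NPadjP => x_cx x_cy x_row; apply/NPadjP; split => [j|j|r i j k ij jk Ai Aj Ak].
- by rewrite !ffunE /=.
- by rewrite !ffunE /= eqxx eq_cy // eqxx (addnC (x (cy n 1))); apply: x_cy.
- by rewrite !ffunE /= !eq_cy //=; apply: x_row ij jk Ai Aj Ak.
Qed.

Lemma np0_NPadj : np0 \in NPadj A.
Proof. by apply/NPadjP; split => *; rewrite !ffunE. Qed.

Lemma row_triple r : #|[set j | A r j]| = 3 ->
  exists i j k : 'I_n, [/\ i < j, j < k, A r i, A r j & A r k].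
Proof.
move=> card3; have : 2 < #|[set j | A r j]| by rewrite card3.
case/card_gt2P => x [y [z [[]]]]; rewrite !inE => Ax Ay Az [].
rewrite -!val_eqE /= => nxy nyz nzx.
have triple (i j k : 'I_n) : i < j -> j < k -> A r i -> A r j -> A r k ->
    exists i j k : 'I_n, [/\ i < j, j < k, A r i, A r j & A r k].
  by move=> *; exists i, j, k.
case: (ltngtP x y) => hxy; last by rewrite hxy eqxx in nxy.
all: case: (ltngtP y z) => hyz; last by rewrite hyz eqxx in nyz.
all: case: (ltngtP x z) => hxz; last by rewrite hxz eqxx in nzx.
all: solve [ apply: (triple x y z) => //; lia | apply: (triple x z y) => //; lia
           | apply: (triple y x z) => //; lia | apply: (triple y z x) => //; lia
           | apply: (triple z x y) => //; lia | apply: (triple z y x) => //; lia | lia ].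
Qed.

Hypothesis m_gt0 : 0 < m.
Hypothesis row3 : forall r : 'I_m, #|[set j | A r j]| = 3.

Lemma NPadj_swap12_fixed x : x \in NPadj A -> swap12 x = x ->
  x = np0 \/ x = complv np0.
Proof.
case/NPadjP => x_cx x_cy x_row /ffunP/(_ (cy n 0)); rewrite ffunE eqxx => y12.
have x_l l : [/\ x (cx l) = x (cy n 0), x (cxb l) = ~~ x (cy n 0)
               & x (cxp l) = ~~ x (cy n 0)].
  move: (x_cx l) (x_cy l); rewrite y12.
  by case: (x (cy n 0)); case: (x (cx l)); case: (x (cxb l)); case: (x (cxp l)).
have y3 : x (cy n 2) = x (cy n 0).
  have [i [j [k [ij jk Ai Aj Ak]]]] := row_triple (row3 (Ordinal m_gt0)).
  have [xi _ _] := x_l i; have [_ _ xj] := x_l j; have [_ _ xk] := x_l k.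
  by move: (x_row _ _ _ _ ij jk Ai Aj Ak); rewrite xi xj xk; case: (x (cy n 2)); case: (x _).
suff -> : x = if x (cy n 0) then complv np0 else np0.
  by case: (x (cy n 0)); [right|left].
apply/ffunP => -[t3|[l|[l|l]]]; last 3 first.
- by have [-> _ _] := x_l l; case: (x (cy n 0)); rewrite !ffunE.
- by have [_ -> _] := x_l l; case: (x (cy n 0)); rewrite !ffunE.
- by have [_ _ ->] := x_l l; case: (x (cy n 0)); rewrite !ffunE.
have -> : inl t3 = cy n t3 by rewrite /cy inord_val.
have -> : x (cy n t3) = x (cy n 0) by case: t3 => -[|[|[|//]]] /= _; rewrite ?y12 ?y3.
by case: (x (cy n 0)); rewrite !ffunE.
Qed.

Lemma card_NPadj_mod4 : #|NPadj A| %% 4 = 2.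
Proof.
set P := NPadj A; set B := [set x : X | swap12 x != x].
have np0_neq : np0 != complv np0 by apply/eqP => /ffunP/(_ (cy n 0)); rewrite !ffunE.
have fixedE : P :\: B = [set np0; complv np0].
  apply/setP => x; rewrite in_setD in_set2 inE negbK; apply/idP/idP.
  - by case/andP => /eqP /NPadj_swap12_fixed fx /fx [] ->; rewrite eqxx ?orbT.
  - have swap_np0 : swap12 np0 = np0 by apply/ffunP => t; rewrite !ffunE; do !case: eqP => [->|_].
    case/orP => /eqP ->; first by rewrite swap_np0 eqxx np0_NPadj.
    by rewrite -swap12_complv swap_np0 eqxx complv_NPadj ?np0_NPadj.
have dvd4 : 4 %| #|P :&: B|.
  apply: (dvd4_card_free_klein (@complvK _) swap12K swap12_complv).
  - move=> x; rewrite !in_setI ![_ \in B]inE => /andP[xP sx]; rewrite complv_NPadj //=.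
    by rewrite -swap12_complv (inj_eq (can_inj (@complvK _))).
  - by move=> x; rewrite !in_setI ![_ \in B]inE => /andP[xP sx]; rewrite swap12_NPadj //= swap12K eq_sym.
  - move=> x; rewrite in_setI [_ \in B]inE => /andP[_ ->] /=; apply/andP; split.
      by apply/eqP => /ffunP/(_ (cy n 0)); rewrite ffunE; case: (x _).
    by apply/eqP => /ffunP/(_ (cy n 2)); rewrite !ffunE !eq_cy //=; case: (x _).
by rewrite -(cardsID B P) fixedE cards2 np0_neq -modnDml (eqP dvd4).
Qed.

End NPadj.

Theorem theorem2 (R : realFieldType) (m n : nat) (A : 'M[bool]_(m, n)) :
  (0 < m)%N -> (0 < n)%N ->
  (forall r : 'I_m, #|[set j | A r j]| = 3%N) ->
  (2 < #|NPadj A|)%N ->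
  forall (V : finType) (e : rel V), irreflexive e -> symmetric e ->
  ~ aff_red R (NPadj A) (Stable e).
Proof.
move=> m_gt0 _ row3 P_gt2 V e _ _ red.
have := dvd4_card_aff_red_Stable (@complv_NPadj _ _ A) P_gt2 red.
by rewrite /dvdn card_NPadj_mod4.
Qed.
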